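(* Let $j\ge2$, let $H$ be a graph, and let $G\cong\mathsf{TS}_j(H)$. Write $q=\omega(G)$ and, for a graph $X$ and integer $t$, let $c_t(X)$ be the number of $t$-cliques of $X$. If $q\ge j+2$, then \[ c_q(G)=\binom{q+j-1}{j-1}\,c_{q+j-1}(H); \] in particular $\binom{q+j-1}{j-1}$ divides $c_q(G)$.
   Context: All graphs are finite, simple, undirected; $\omega(G)$ is the clique number. A $k$-clique of a graph $H$ is a set of $k$ pairwise adjacent vertices. For a graph $H$ and integer $k\ge1$, the Token Sliding graph $\mathsf{TS}_k(H)$ has as vertices the $k$-cliques of $H$, and two $k$-cliques $A,B$ are adjacent iff $A\setminus B=\{u\}$, $B\setminus A=\{v\}$ for some vertices $u,v$ with $uv\in E(H)$. *)

From mathcomp Require Import all_boot.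
Set Implicit Arguments. Unset Strict Implicit. Unset Printing Implicit Defensive.

Definition simple_graph (T : finType) (e : rel T) : Prop :=
  symmetric e /\ irreflexive e.

Definition is_clique (T : finType) (e : rel T) (A : {set T}) : bool :=
  [forall x in A, forall y in A, (x != y) ==> e x y].

Definition cliques (T : finType) (e : rel T) (k : nat) : {set {set T}} :=
  [set A : {set T} | is_clique e A && (#|A| == k)].

Definition nclq (T : finType) (e : rel T) (k : nat) : nat := #|cliques e k|.

Definition clique_number (T : finType) (e : rel T) : nat :=
  \max_(A : {set T} | is_clique e A) #|A|.

Definition ts_adj (T : finType) (e : rel T) (A B : {set T}) : bool :=
  [exists u, exists v, [&& A :\: B == [set u], B :\: A == [set v] & e u v]].

(* f : G -> {set T} is a graph isomorphism from (G, eG) onto TS_j(H):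
   a bijection onto the j-cliques of H, transporting adjacency to
   token-sliding adjacency. *)
Definition TS_iso (T : finType) (eH : rel T) (j : nat)
    (G : finType) (eG : rel G) (f : G -> {set T}) : Prop :=
  [/\ injective f,
      (forall x, f x \in cliques eH j),
      (forall A, A \in cliques eH j -> exists x, f x = A) &
      (forall x y, eG x y = ts_adj eH (f x) (f y))].

From mathcomp Require Import all_boot zify.
Set Implicit Arguments. Unset Strict Implicit. Unset Printing Implicit Defensive.

(* A clique of TS_j(H) is a family of j-cliques of H any two of which differ in
   exactly one vertex.  Such a family either has a common (j-1)-element core S,
   or lies inside a single (j+1)-set and then has at most j+1 members; as
   q >= j+2, every maximum clique is of the first kind.  The union K of its
   members is a clique of H, and maximality forces the family to consist of all
   j-sets between S and K, whence |K| = q+j-1.  Conversely every such pair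
   (K, S) yields a maximum clique, from which K and S are recovered as the union
   and the intersection of its members. *)

Section SetU1.
Variable T : finType.
Implicit Types (A K S : {set T}) (u v : T).

Lemma setU1_of_card S A :
  S \subset A -> #|A| = #|S|.+1 -> exists2 u, u \notin S & A = u |: S.
Proof.
move=> SA cardA.
have /cards1P[u Du] : #|A :\: S| == 1 by rewrite cardsDS // cardA subSnn.
have /setDP[uA uS] : u \in A :\: S by rewrite Du set11.
exists u => //; apply/eqP; rewrite eq_sym eqEcard subUset sub1set uA SA /=.
by rewrite cardsU1 uS cardA.
Qed.

Lemma setU1_inj_notin S u v : u \notin S -> u |: S = v |: S -> u = v.
Proof.
move=> uS eqS; have /setU1P[-> // | uS'] : u \in v |: S by rewrite -eqS setU11.
by rewrite uS' in uS.
Qed.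

Lemma setDU1_set1 S u v : u \notin S -> u != v -> (u |: S) :\: (v |: S) = [set u].
Proof.
move=> uS uv; apply/setP=> w; rewrite !inE.
case: (eqVneq w u) => [->|_] /=; first by rewrite (negbTE uS) (negbTE uv).
by case: (w \in S); rewrite ?orbT ?andbF.
Qed.

Definition star S K : {set {set T}} := [set u |: S | u in K :\: S].

Lemma card_star S K : #|star S K| = #|K :\: S|.
Proof.
apply: card_in_imset => u v /setDP[_ uS] /setDP[_ vS]; exact: setU1_inj_notin.
Qed.

Lemma bigcup_star S K : S \subset K -> 0 < #|K :\: S| ->
  \bigcup_(A in star S K) A = K.
Proof.
move=> SK /card_gt0P[w wD]; apply/setP=> t; apply/bigcupP/idP.
  by case=> _ /imsetP[u /setDP[uK _] ->]; case/setU1P=> [->|/(subsetP SK)].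
move=> tK; have [tS|tS] := boolP (t \in S).
  by exists (w |: S); [exact: imset_f wD | rewrite setU1r].
by exists (t |: S); [apply: imset_f; rewrite inE tS | rewrite setU11].
Qed.

Lemma bigcap_star S K : 1 < #|K :\: S| -> \bigcap_(A in star S K) A = S.
Proof.
move=> two; apply/setP=> t; apply/bigcapP/idP => [inF|tS]; last first.
  by move=> _ /imsetP[u _ ->]; rewrite setU1r.
have [w wD wt] : exists2 w, w \in K :\: S & w != t.
  have /card_gt0P[w] : 0 < #|(K :\: S) :\ t| by rewrite (cardsD1 t) in two; lia.
  by rewrite in_setD1 => /andP[wt wD]; exists w.
move: (inF _ (imset_f (fun u => u |: S) wD)); case/setU1P=> // tw.
by rewrite tw eqxx in wt.
Qed.

End SetU1.

Section JohnsonClique.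
Variables (T : finType) (j : nat) (F : {set {set T}}).
Hypothesis card_F : {in F, forall A : {set T}, #|A| = j}.
Hypothesis adj_F : {in F &, forall A B : {set T}, A != B -> #|A :\: B| = 1}.

Lemma card_setU_adj A B : A \in F -> B \in F -> A != B -> #|A :|: B| = j.+1.
Proof.
move=> AF BF AB; have := cardsUI A B; have := cardsID B A.
by rewrite (card_F AF) (card_F BF) (adj_F AF BF AB); lia.
Qed.

Lemma eq_setU_D1_adj A B D s : A \in F -> B \in F -> D \in F -> A != B ->
  s \in A -> s \in B -> s \notin D -> D = (A :|: B) :\ s.
Proof.
move=> AF BF DF AB sA sB sD.
have subD X : X \in F -> s \in X -> X :\ s \subset D.
  move=> XF sX; have XD : X != D by apply: contraNneq sD => <-.
  apply/subsetP=> t /setD1P[ts tX]; apply: contraNT ts => tD.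
  by apply/eqP/(card_le1_eqP (eq_leq (adj_F XF DF XD))); apply/setDP.
apply/esym/eqP; rewrite eqEcard setDUl subUset !subD //= (card_F DF) -setDUl.
by have := cardsD1 s (A :|: B); rewrite in_setU sA card_setU_adj //; lia.
Qed.

Lemma sub_setU_adj A B C s : A \in F -> B \in F -> C \in F -> A != B ->
  s \in A -> s \in B -> s \notin C -> {in F, forall D : {set T}, D \subset A :|: B}.
Proof.
move=> AF BF CF AB sA sB sC D DF.
have [sD|sD] := boolP (s \in D); last first.
  by rewrite (eq_setU_D1_adj AF BF DF AB sA sB sD) subD1set.
have eqC := eq_setU_D1_adj AF BF CF AB sA sB sC.
have AC : A != C by apply: contraNneq sC => <-.
have [ACD | /subsetPn[t /setIP[tA tC] tD]] := boolP (A :&: C \subset D); last first.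
  rewrite (eq_setU_D1_adj AF CF DF AC tA tC tD); apply: subset_trans (subD1set _ _) _.
  by rewrite subUset subsetUl eqC subD1set.
have AD : A \subset D.
  apply/subsetP=> t tA; have [-> //|ts] := eqVneq t s.
  by apply: (subsetP ACD); rewrite inE tA eqC !inE ts tA.
have -> : D = A by apply/esym/eqP; rewrite eqEcard AD (card_F AF) (card_F DF) /=.
exact: subsetUl.
Qed.

Lemma johnson_clique_core : j + 2 <= #|F| ->
  exists2 S : {set T}, #|S| = j.-1 & {in F, forall A : {set T}, S \subset A}.
Proof.
move=> bigF; have [A AF] : exists A, A \in F by apply/set0Pn; rewrite -card_gt0; lia.
have [B BF AB] : exists2 B, B \in F & A != B.
  have /card_gt0P[B /setD1P[BA BF]] : 0 < #|F :\ A|.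
    by rewrite (cardsD1 A) AF in bigF; lia.
  by exists B; rewrite 1?eq_sym.
exists (A :&: B).
  by have := cardsUI A B; rewrite card_setU_adj // (card_F AF) (card_F BF); lia.
move=> C CF; apply/subsetP=> s /setIP[sA sB]; apply: contraT => sC.
have : F \subset [set D : {set T} | D \subset A :|: B & #|D| == j].
  apply/subsetP=> D DF; rewrite inE (card_F DF) eqxx andbT.
  exact: (sub_setU_adj AF BF CF AB sA sB sC).
by move/subset_leq_card; rewrite cards_draws card_setU_adj // binSn; lia.
Qed.

End JohnsonClique.

Section Cliques.
Variables (T : finType) (e : rel T).

Lemma is_cliqueP (A : {set T}) :
  reflect {in A &, forall x y, x != y -> e x y} (is_clique e A).
Proof.
apply: (iffP forall_inP) => [cA x y xA yA | cA x xA].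
  by move: (cA x xA) => /forall_inP/(_ y yA)/implyP.
by apply/forall_inP => y yA; apply/implyP/cA.
Qed.

Lemma clique_subset (A B : {set T}) : is_clique e B -> A \subset B -> is_clique e A.
Proof.
by move=> /is_cliqueP cB /subsetP AB; apply/is_cliqueP => x y /AB xB /AB; apply: cB.
Qed.

Lemma card_clique_le_number (A : {set T}) : is_clique e A -> #|A| <= clique_number e.
Proof. exact: (@leq_bigmax_cond _ (is_clique e) (fun A => #|A|)). Qed.

Lemma ts_adj_card1 (A B : {set T}) : ts_adj e A B -> #|A :\: B| = 1.
Proof. by case/existsP=> u /existsP[v /and3P[/eqP-> _ _]]; rewrite cards1. Qed.

Lemma ts_adj_edge (A B : {set T}) a b :
  ts_adj e A B -> a \in A :\: B -> b \in B :\: A -> e a b.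
Proof.
case/existsP=> u /existsP[v /and3P[/eqP-> /eqP-> euv]].
by rewrite !inE => /eqP-> /eqP->.
Qed.

Definition clique_cores n k : {set {set T} * {set T}} :=
  [set KS : {set T} * {set T} |
     [&& KS.1 \in cliques e n, KS.2 \subset KS.1 & #|KS.2| == k]].

Lemma clique_coresP n k (K S : {set T}) :
  reflect [/\ is_clique e K, #|K| = n, S \subset K & #|S| = k]
          ((K, S) \in clique_cores n k).
Proof.
rewrite !inE /=; apply: (iffP and3P) => [[/andP[cK /eqP ->] SK /eqP ->] // |].
by case=> -> -> -> ->; rewrite !eqxx.
Qed.

Lemma card_clique_cores n k : #|clique_cores n k| = 'C(n, k) * nclq e n.
Proof.
rewrite -sum1_card (eq_bigl _ _ (fun KS => in_set _ KS)).
rewrite -(pair_big_dep (mem (cliques e n))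
  (fun K S : {set T} => (S \subset K) && (#|S| == k)) (fun _ _ => 1)) /=.
rewrite (eq_bigr (fun _ => 'C(n, k))) ?sum_nat_const 1?mulnC //.
move=> K; rewrite inE => /andP[_ /eqP <-].
by rewrite -cards_draws -sum1_card; apply: eq_bigl => S; rewrite inE.
Qed.

Lemma ts_adj_setU1 (S : {set T}) u v :
  u \notin S -> v \notin S -> u != v -> e u v -> ts_adj e (u |: S) (v |: S).
Proof.
move=> uS vS uv euv; apply/existsP; exists u; apply/existsP; exists v.
by rewrite !setDU1_set1 // 1?eq_sym ?eqxx.
Qed.

End Cliques.

Section TokenSliding.
Variables (T : finType) (eH : rel T) (j : nat) (G : finType) (eG : rel G).
Variable f : G -> {set T}.
Hypothesis isoG : TS_iso eH j eG f.
Hypothesis j_gt0 : 0 < j.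

Let f_inj : injective f. Proof. by case: isoG. Qed.

Let f_cliques x : f x \in cliques eH j. Proof. by case: isoG. Qed.

Let f_onto A : A \in cliques eH j -> exists x, f x = A.
Proof. by case: isoG => _ _ /(_ A). Qed.

Let eG_ts x y : eG x y = ts_adj eH (f x) (f y). Proof. by case: isoG => _ _ _ ->. Qed.

Let card_f x : #|f x| = j.
Proof. by have /setIdP[_ /eqP] := f_cliques x. Qed.

Lemma is_clique_bigcup_f (C : {set G}) :
  is_clique eG C -> is_clique eH (\bigcup_(x in C) f x).
Proof.
move=> /is_cliqueP cC; apply/is_cliqueP => a b /bigcupP[x xC afx] /bigcupP[y yC bfy] ab.
have clique_f z : is_clique eH (f z) by have /setIdP[] := f_cliques z.
have [exy|xy] := eqVneq x y.
  by rewrite exy in afx; exact: (is_cliqueP _ _ (clique_f y)).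
have [ay|ay] := boolP (a \in f y); first exact: (is_cliqueP _ _ (clique_f y)).
have [bx|bx] := boolP (b \in f x); first exact: (is_cliqueP _ _ (clique_f x)).
apply: (ts_adj_edge (A := f x) (B := f y)); last by rewrite inE bx bfy.
  by rewrite -eG_ts cC.
by rewrite inE ay afx.
Qed.

Definition sandwich (S K : {set T}) : {set G} :=
  [set x | (S \subset f x) && (f x \subset K)].

Section Sandwich.
Variables S K : {set T}.
Hypotheses (cK : is_clique eH K) (SK : S \subset K) (cardS : #|S| = j.-1).

Lemma f_sandwich : f @: sandwich S K = star S K.
Proof.
apply/setP=> A; apply/imsetP/imsetP => [[x /setIdP[Sx xK] ->] | [u /setDP[uK uS] ->]].
  have cardfx : #|f x| = #|S|.+1 by rewrite card_f cardS prednK.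
  have [u uS fxE] := setU1_of_card Sx cardfx.
  by exists u; rewrite // inE uS (subsetP xK) // fxE setU11.
have [|x fx] := f_onto (A := u |: S).
  rewrite inE cardsU1 uS cardS add1n prednK // eqxx andbT.
  by apply: clique_subset cK _; rewrite subUset sub1set uK SK.
by exists x; rewrite // inE fx subsetUr subUset sub1set uK SK.
Qed.

Lemma card_sandwich : #|sandwich S K| = #|K :\: S|.
Proof. by rewrite -(card_imset _ f_inj) f_sandwich card_star. Qed.

Lemma is_clique_sandwich : is_clique eG (sandwich S K).
Proof.
have in_star x : x \in sandwich S K -> f x \in star S K.
  by move=> xS; rewrite -f_sandwich imset_f.
apply/is_cliqueP => x y /in_star/imsetP[u /setDP[uK uS] fx].
move=> /in_star/imsetP[v /setDP[vK vS] fy] xy.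
have uv : u != v by apply: contraNneq xy => euv; apply/eqP/f_inj; rewrite fx fy euv.
by rewrite eG_ts fx fy ts_adj_setU1 //; apply: (is_cliqueP _ _ cK).
Qed.

End Sandwich.

Lemma sandwich_in_cliques n KS : KS \in clique_cores eH n j.-1 ->
  sandwich KS.2 KS.1 \in cliques eG (n - j.-1).
Proof.
case: KS => K S /clique_coresP[cK cardK SK cardS] /=.
by rewrite inE is_clique_sandwich // card_sandwich // cardsDS // cardK cardS eqxx.
Qed.

Lemma sandwich_inj n : j < n ->
  {in clique_cores eH n j.-1 &, injective (fun KS => sandwich KS.2 KS.1)}.
Proof.
move=> jn [K S] [K' S'] /clique_coresP[cK cardK SK cardS].
move=> /clique_coresP[cK' cardK' SK' cardS'] /= eqsw.
have two_out : 1 < #|K :\: S| by rewrite cardsDS // cardK cardS; lia.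
have two_out' : 1 < #|K' :\: S'| by rewrite cardsDS // cardK' cardS'; lia.
have eq_star : star S K = star S' K'.
  by rewrite -f_sandwich // -[RHS]f_sandwich // eqsw.
congr (_, _).
  by rewrite -(bigcup_star SK (ltnW two_out)) eq_star bigcup_star // ltnW.
by rewrite -(bigcap_star two_out) eq_star bigcap_star.
Qed.

Lemma max_clique_sandwich (C : {set G}) : j + 2 <= clique_number eG ->
  C \in cliques eG (clique_number eG) ->
  exists2 KS, KS \in clique_cores eH (clique_number eG + j.-1) j.-1 &
              C = sandwich KS.2 KS.1.
Proof.
move=> big_q /setIdP[cC /eqP cardC].
have [S cardS coreS] : exists2 S : {set T},
    #|S| = j.-1 & {in f @: C, forall A : {set T}, S \subset A}.
  apply: johnson_clique_core; last by rewrite card_imset // cardC.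
    by move=> _ /imsetP[x _ ->]; apply: card_f.
  move=> _ _ /imsetP[x xC ->] /imsetP[y yC ->] fxy.
  have xy : x != y by apply: contraNneq fxy => ->.
  apply: (ts_adj_card1 (e := eH) (B := f y)).
  by rewrite -eG_ts; apply: (is_cliqueP _ _ cC).
set K := \bigcup_(x in C) f x.
have cK : is_clique eH K := is_clique_bigcup_f cC.
have [x0 x0C] : exists x0, x0 \in C by apply/set0Pn; rewrite -card_gt0 cardC; lia.
have SK : S \subset K.
  exact: subset_trans (coreS _ (imset_f f x0C)) (bigcup_sup _ x0C).
have C_sandwich : C \subset sandwich S K.
  by apply/subsetP=> x xC; rewrite inE coreS ?imset_f // (bigcup_sup _ xC).
have le_q := card_clique_le_number (is_clique_sandwich cK SK cardS).
have ge_q := subset_leq_card C_sandwich.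
rewrite cardC card_sandwich // cardsDS // cardS in ge_q le_q *.
have := subset_leq_card SK; rewrite cardS => leSK.
exists (K, S); first by apply/clique_coresP; split => //; lia.
by apply/eqP; rewrite eqEcard C_sandwich card_sandwich // cardsDS // cardC cardS.
Qed.

Lemma max_cliques_eq_sandwiches : j + 2 <= clique_number eG ->
  cliques eG (clique_number eG) =
  [set sandwich KS.2 KS.1 | KS in clique_cores eH (clique_number eG + j.-1) j.-1].
Proof.
move=> big_q; apply/setP=> C; apply/idP/imsetP => [qC | [KS KScore ->]].
  exact: max_clique_sandwich.
by rewrite -[X in cliques _ X](addnK j.-1) sandwich_in_cliques.
Qed.

End TokenSliding.

Theorem proposition3p10 (T : finType) (eH : rel T) (j : nat)
    (G : finType) (eG : rel G) (f : G -> {set T}) :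
  simple_graph eH -> simple_graph eG -> 2 <= j -> TS_iso eH j eG f ->
  let q := clique_number eG in
  j + 2 <= q ->
  nclq eG q = 'C(q + j - 1, j - 1) * nclq eH (q + j - 1) /\
  'C(q + j - 1, j - 1) %| nclq eG q.
Proof.
move=> _ _ j2 isoG q big_q.
have j_gt0 : 0 < j by lia.
have -> : q + j - 1 = q + j.-1 by lia.
have count : nclq eG q = 'C(q + j.-1, j.-1) * nclq eH (q + j.-1).
  rewrite /nclq (max_cliques_eq_sandwiches isoG) // card_in_imset.
    exact: card_clique_cores.
  by apply: (sandwich_inj isoG) => //; lia.
by rewrite subn1 count dvdn_mulr.
Qed.
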